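(* Let $n\ge 2$ be an integer and let $f_n(t)=\dfrac{t^{n-1}}{(1-e^{-t})^2}$ for $t>0$. Then for every $a>0$, $$I_1(a;n):=\int_0^1\bigl[(2n-3)x^2-1\bigr]\,f_n\bigl(a(1+x)\bigr)\,f_n\bigl(a(1-x)\bigr)\,dx<0 .$$ *)

From Stdlib Require Import Reals.
From Coquelicot Require Import Coquelicot.
Open Scope R_scope.

Definition f_n (n : nat) (t : R) : R := t ^ (n - 1) / (1 - exp (- t)) ^ 2.

Definition I1_integrand (n : nat) (a x : R) : R :=
  ((2 * INR n - 3) * x ^ 2 - 1) * f_n n (a * (1 + x)) * f_n n (a * (1 - x)).

(* Write 1 - e^{-t} = t rho(t). For n = k + 2 the integrand becomes
   -a^{2k-2} P_k'(x) / (rho(a(1+x)) rho(a(1-x)))^2 with P_k(x) = x (1 - x^2)^k.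
   P_k' is positive before x0 = 1/sqrt(2k+1) and nonpositive after it, while the
   weight 1/(rho(a(1+x)) rho(a(1-x)))^2 strictly decreases on [0,1], because
   rho'/rho = 1/(e^t - 1) - 1/t is increasing (equivalently e^{t/2} - e^{-t/2} > t).
   So the weighted integral of P_k' exceeds weight(x0) (P_k(1) - P_k(0)) >= 0. *)

From Stdlib Require Import Reals Lra Psatz.
From Coquelicot Require Import Coquelicot.
Open Scope R_scope.

Lemma is_derive_pos_lt (f df : R -> R) (p q : R) : p < q ->
  (forall x, p < x < q -> is_derive f x (df x)) ->
  (forall x, p < x < q -> 0 < df x) ->
  (forall x, p <= x <= q -> continuous f x) -> f p < f q.
Proof.
  intros Hpq Hd Hpos Hc.
  assert (pr_f : forall c, p < c < q -> derivable_pt f c).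
  { intros c Hc'. exists (df c). apply is_derive_Reals. now apply Hd. }
  assert (pr_id : forall c, p < c < q -> derivable_pt id c).
  { intros c _. apply derivable_pt_id. }
  destruct (MVT f id p q pr_f pr_id Hpq) as [c [Hc' HMVT]].
  - intros c Hc'. apply continuity_pt_filterlim. now apply Hc.
  - intros c _. apply derivable_continuous_pt. apply derivable_pt_id.
  - rewrite (derive_pt_eq_0 f c (df c) (pr_f c Hc')) in HMVT
      by (apply is_derive_Reals; now apply Hd).
    rewrite (derive_pt_eq_0 id c 1 (pr_id c Hc')) in HMVT
      by apply derivable_pt_lim_id.
    unfold id in HMVT. specialize (Hpos c Hc'). nra.
Qed.

Lemma one_lt_exp (t : R) : 0 < t -> 1 < exp t.
Proof. intros Ht. rewrite <- exp_0. apply exp_increasing, Ht. Qed.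

Lemma exp_sub_exp_opp_gt (t : R) : 0 < t -> 2 * t < exp t - exp (- t).
Proof.
  intros Ht.
  set (f s := exp s - exp (- s) - 2 * s).
  enough (f 0 < f t) by (unfold f in *; rewrite Ropp_0, exp_0 in *; lra).
  apply (is_derive_pos_lt f (fun s => exp s + exp (- s) - 2)); auto.
  - intros x _. unfold f. auto_derive; auto. ring.
  - intros x [Hx _]. rewrite exp_Ropp.
    assert (1 < exp x) by now apply one_lt_exp.
    apply Rmult_lt_reg_r with (exp x); [lra|].
    field_simplify; nra.
  - intros x _. apply (ex_derive_continuous (K := R_AbsRing) (V := R_NormedModule)).
    unfold f. auto_derive; auto.
Qed.

Lemma sqr_exp_sub1_gt (t : R) : 0 < t -> t ^ 2 * exp t < (exp t - 1) ^ 2.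
Proof.
  intros Ht.
  assert (Hsinh := exp_sub_exp_opp_gt (t / 2) ltac:(lra)).
  rewrite exp_Ropp in Hsinh.
  set (y := exp (t / 2)) in *.
  assert (Hy : 1 < y) by (apply one_lt_exp; lra).
  assert (Ey : exp t = y * y) by (unfold y; rewrite <- exp_plus; f_equal; lra).
  assert (Hty : t * y < y * y - 1).
  { replace (y * y - 1) with ((y - / y) * y) by (field; lra). nra. }
  rewrite Ey. assert (0 < t * y) by nra. nra.
Qed.

(* [kappa] is the logarithmic derivative of [rho] below. *)
Definition kappa (t : R) := 1 / (exp t - 1) - 1 / t.

Lemma kappa_lt (s t : R) : 0 < s -> s < t -> kappa s < kappa t.
Proof.
  intros Hs Hst.
  apply (incr_function kappa 0 p_infty (fun x => - exp x / (exp x - 1) ^ 2 + 1 / x ^ 2));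
    simpl; auto.
  - intros x Hx _. assert (1 < exp x) by now apply one_lt_exp.
    unfold kappa. auto_derive; [repeat split; lra|]. field. split; lra.
  - intros x Hx _. assert (1 < exp x) by now apply one_lt_exp.
    assert (Hsq := sqr_exp_sub1_gt x Hx).
    apply Rmult_lt_reg_r with (x ^ 2 * (exp x - 1) ^ 2).
    { apply Rmult_lt_0_compat; apply pow_lt; lra. }
    field_simplify; nra.
Qed.

Definition rho (t : R) := if Req_EM_T t 0 then 1 else (1 - exp (- t)) / t.

Lemma rho_eq (t : R) : t <> 0 -> rho t = (1 - exp (- t)) / t.
Proof. intros Ht. unfold rho. now destruct (Req_EM_T t 0). Qed.

Lemma rho0 : rho 0 = 1.
Proof. unfold rho. now destruct (Req_EM_T 0 0). Qed.

Lemma rho_pos (t : R) : 0 <= t -> 0 < rho t.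
Proof.
  intros Ht. destruct (Req_dec t 0) as [->|Hn]; [rewrite rho0; lra|].
  rewrite rho_eq by exact Hn.
  assert (exp (- t) < 1) by (rewrite <- exp_0; apply exp_increasing; lra).
  apply Rdiv_lt_0_compat; lra.
Qed.

Lemma is_derive_rho (t : R) : 0 < t -> is_derive rho t (rho t * kappa t).
Proof.
  intros Ht. apply (is_derive_ext_loc (fun y => (1 - exp (- y)) / y)).
  - exists (mkposreal t Ht). intros y Hy.
    change (Rabs (y - t) < t) in Hy. apply Rabs_def2 in Hy.
    rewrite rho_eq; [reflexivity | lra].
  - assert (1 < exp t) by now apply one_lt_exp.
    rewrite rho_eq by lra. unfold kappa.
    auto_derive; [lra|]. rewrite exp_Ropp. field. repeat split; lra.
Qed.

Lemma continuous_rho (t : R) : 0 <= t -> continuous rho t.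
Proof.
  intros Ht. destruct (Req_dec t 0) as [->|Hn].
  - apply continuity_pt_filterlim, continuity_pt_filterlim'. rewrite rho0.
    change (is_lim rho 0 1).
    apply (is_lim_ext_loc (fun y => (exp (- y) - 1) / (- y))).
    { exists (mkposreal 1 Rlt_0_1). intros y _ Hy.
      rewrite rho_eq by auto. field. auto. }
    apply (is_lim_comp (fun y => (exp y - 1) / y) Ropp 0 1 0).
    + apply is_lim_div_expm1_0.
    + rewrite <- Ropp_0 at 2. apply (is_lim_opp id 0 0), is_lim_id.
    + exists (mkposreal 1 Rlt_0_1). intros y _ Hy E. apply Hy.
      simpl in E. injection E. intros. lra.
  - apply (ex_derive_continuous (K := R_AbsRing) (V := R_NormedModule)).
    exists (rho t * kappa t). apply is_derive_rho. lra.
Qed.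

Definition rho_prod (a x : R) := rho (a * (1 + x)) * rho (a * (1 - x)).

Lemma rho_prod_pos (a x : R) : 0 < a -> 0 <= x <= 1 -> 0 < rho_prod a x.
Proof. intros. unfold rho_prod. apply Rmult_lt_0_compat; apply rho_pos; nra. Qed.

Lemma continuous_rho_prod (a x : R) : 0 < a -> 0 <= x <= 1 -> continuous (rho_prod a) x.
Proof.
  intros Ha Hx. unfold rho_prod.
  apply (continuous_mult (fun z => rho (a * (1 + z))) (fun z => rho (a * (1 - z))));
    apply (continuous_comp _ rho);
    try (apply continuous_rho; nra);
    apply (ex_derive_continuous (K := R_AbsRing) (V := R_NormedModule)); auto_derive; auto.
Qed.

Lemma rho_prod_lt (a x y : R) : 0 < a -> 0 <= x -> x < y -> y <= 1 ->
  rho_prod a x < rho_prod a y.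
Proof.
  intros Ha Hx Hxy Hy.
  apply (is_derive_pos_lt (rho_prod a) (fun z =>
    a * rho_prod a z * (kappa (a * (1 + z)) - kappa (a * (1 - z))))); auto.
  - intros z Hz.
    set (u := a * (1 + z)); set (v := a * (1 - z)).
    assert (Du : is_derive (fun z => rho (a * (1 + z))) z (a * (rho u * kappa u))).
    { apply (is_derive_comp rho); [apply is_derive_rho; unfold u; nra|].
      auto_derive; auto. ring. }
    assert (Dv : is_derive (fun z => rho (a * (1 - z))) z (- a * (rho v * kappa v))).
    { apply (is_derive_comp rho); [apply is_derive_rho; unfold v; nra|].
      auto_derive; auto. ring. }
    replace (a * rho_prod a z * (kappa u - kappa v)) with
      (plus (mult (a * (rho u * kappa u)) (rho v)) (mult (rho u) (- a * (rho v * kappa v))))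
      by (unfold rho_prod, plus, mult; simpl; fold u v; ring).
    exact (is_derive_mult _ _ _ _ _ Du Dv Rmult_comm).
  - intros z Hz.
    assert (kappa (a * (1 - z)) < kappa (a * (1 + z))) by (apply kappa_lt; nra).
    assert (0 < rho_prod a z) by (apply rho_prod_pos; lra).
    apply Rmult_lt_0_compat; [apply Rmult_lt_0_compat|]; lra.
  - intros z Hz. apply continuous_rho_prod; lra.
Qed.

Lemma continuous_inv_sqr_rho_prod (a x : R) : 0 < a -> 0 <= x <= 1 ->
  continuous (fun y => / rho_prod a y ^ 2) x.
Proof.
  intros Ha Hx. apply (continuous_Rinv_comp (fun y => rho_prod a y ^ 2)).
  - apply (continuous_comp (rho_prod a) (fun y => y ^ 2)).
    + now apply continuous_rho_prod.
    + apply (ex_derive_continuous (K := R_AbsRing) (V := R_NormedModule)).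
      auto_derive. auto.
  - apply pow_nonzero. assert (0 < rho_prod a x) by now apply rho_prod_pos. lra.
Qed.

Definition P (k : nat) (x : R) := x * (1 - x ^ 2) ^ k.

(* For [k = 0] the second term vanishes, so the truncated [k - 1] is harmless. *)
Definition dP (k : nat) (x : R) :=
  (1 - x ^ 2) ^ k - 2 * INR k * x ^ 2 * (1 - x ^ 2) ^ (k - 1).

Lemma is_derive_P (k : nat) (x : R) : is_derive (P k) x (dP k x).
Proof.
  unfold P, dP. auto_derive; auto. destruct k as [|k]; [simpl; ring|].
  rewrite S_INR; cbn [Nat.sub Nat.pred pow]; rewrite Nat.sub_0_r. unfold Rminus. ring.
Qed.

Lemma continuous_dP (k : nat) (x : R) : continuous (dP k) x.
Proof.
  apply (ex_derive_continuous (K := R_AbsRing) (V := R_NormedModule)).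
  unfold dP. auto_derive. auto.
Qed.

Lemma dP_mul_one_sub_sqr (k : nat) (x : R) :
  dP k x * (1 - x ^ 2) = (1 - x ^ 2) ^ k * (1 - (2 * INR k + 1) * x ^ 2).
Proof.
  unfold dP. destruct k as [|k]; [simpl; ring|].
  rewrite S_INR; cbn [Nat.sub Nat.pred pow]; rewrite Nat.sub_0_r. unfold Rminus. ring.
Qed.

Definition dP_root (k : nat) := / sqrt (2 * INR k + 1).

Lemma dP_root_sqr (k : nat) : (2 * INR k + 1) * dP_root k ^ 2 = 1.
Proof.
  assert (Hk := pos_INR k). unfold dP_root.
  rewrite pow_inv, pow2_sqrt by lra. field. lra.
Qed.

Lemma dP_root_bounds (k : nat) : 0 < dP_root k <= 1.
Proof.
  assert (Hk := pos_INR k). assert (Hsq := dP_root_sqr k).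
  assert (0 < dP_root k) by (apply Rinv_0_lt_compat, sqrt_lt_R0; lra).
  split; [lra | nra].
Qed.

Lemma dP_pos (k : nat) (x : R) : 0 <= x < dP_root k -> 0 < dP k x.
Proof.
  intros Hx. assert (Hk := pos_INR k). assert (Hr := dP_root_bounds k).
  assert (H1 : 0 < 1 - x ^ 2) by nra.
  assert (H2 : (2 * INR k + 1) * x ^ 2 < 1).
  { assert (Hsq := dP_root_sqr k). assert (x ^ 2 < dP_root k ^ 2) by nra. nra. }
  assert (Hpow : 0 < (1 - x ^ 2) ^ k) by (apply pow_lt; lra).
  assert (H := dP_mul_one_sub_sqr k x). nra.
Qed.

Lemma dP_nonpos (k : nat) (x : R) : dP_root k < x < 1 -> dP k x <= 0.
Proof.
  intros Hx. assert (Hk := pos_INR k). assert (Hr := dP_root_bounds k).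
  assert (H1 : 0 < 1 - x ^ 2) by nra.
  assert (H2 : 1 < (2 * INR k + 1) * x ^ 2).
  { assert (Hsq := dP_root_sqr k). assert (dP_root k ^ 2 < x ^ 2) by nra. nra. }
  assert (Hpow : 0 < (1 - x ^ 2) ^ k) by (apply pow_lt; lra).
  assert (H := dP_mul_one_sub_sqr k x). nra.
Qed.

Lemma RInt_mul_sign_change (h w : R -> R) (a x0 b : R) : a < x0 <= b ->
  (forall x, a <= x <= b -> continuous h x) ->
  (forall x, a <= x <= b -> continuous w x) ->
  (forall x, a < x < x0 -> 0 < w x /\ h x0 < h x) ->
  (forall x, x0 < x < b -> w x <= 0 /\ h x <= h x0) ->
  h x0 * RInt w a b < RInt (fun x => h x * w x) a b.
Proof.
  intros Hx0 Hh Hw Hleft Hright.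
  set (hw x := h x * w x); set (h0w x := h x0 * w x).
  assert (Chw : forall x, a <= x <= b -> continuous hw x)
    by (intros; apply (continuous_mult h w); auto).
  assert (Ch0w : forall x, a <= x <= b -> continuous h0w x)
    by (intros; apply (continuous_mult (fun _ => h x0) w); auto using continuous_const).
  assert (ex_on : forall (f : R -> R) p q, a <= p -> p <= q -> q <= b ->
    (forall x, a <= x <= b -> continuous f x) -> ex_RInt f p q).
  { intros f p q Hp Hpq Hq Hf. apply (ex_RInt_continuous (V := R_CompleteNormedModule)).
    intros z Hz. rewrite Rmin_left, Rmax_right in Hz by lra. apply Hf. lra. }
  assert (Hlt : RInt h0w a x0 < RInt hw a x0).
  { apply RInt_lt; try lra; try (intros; first [apply Chw | apply Ch0w]; lra).
    intros x Hx. destruct (Hleft x Hx). unfold hw, h0w. nra. }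
  assert (Hle : RInt h0w x0 b <= RInt hw x0 b).
  { apply RInt_le; try lra; try (apply ex_on; auto; lra).
    intros x Hx. destruct (Hright x Hx). unfold hw, h0w. nra. }
  assert (Escal : RInt h0w a b = h x0 * RInt w a b)
    by (apply (RInt_scal w a b (h x0)); apply ex_on; auto; lra).
  rewrite <- Escal, <- (RInt_Chasles hw a x0 b), <- (RInt_Chasles h0w a x0 b)
    by (apply ex_on; auto; lra).
  unfold plus; simpl. lra.
Qed.

Lemma RInt_dP_div_rho_prod_pos (k : nat) (a : R) : 0 < a ->
  0 < RInt (fun x => dP k x / rho_prod a x ^ 2) 0 1.
Proof.
  intros Ha. assert (Hr := dP_root_bounds k).
  set (h x := / rho_prod a x ^ 2).
  assert (h_lt : forall x y, 0 <= x -> x < y -> y <= 1 -> h y < h x).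
  { intros x y Hx Hxy Hy. unfold h.
    assert (rho_prod a x < rho_prod a y) by now apply rho_prod_lt.
    assert (0 < rho_prod a x) by (apply rho_prod_pos; lra).
    apply Rinv_lt_contravar; [apply Rmult_lt_0_compat|]; nra. }
  assert (Hmain : h (dP_root k) * RInt (dP k) 0 1 < RInt (fun x => h x * dP k x) 0 1).
  { apply RInt_mul_sign_change; auto using continuous_dP.
    - intros x Hx. now apply continuous_inv_sqr_rho_prod.
    - intros x Hx. split; [apply dP_pos; split; lra | apply h_lt; lra].
    - intros x Hx. split; [apply dP_nonpos; split; lra|]. apply Rlt_le, h_lt; lra. }
  assert (HP : RInt (dP k) 0 1 = P k 1 - P k 0).
  { apply is_RInt_unique, (is_RInt_derive (V := R_CompleteNormedModule));
      auto using is_derive_P, continuous_dP. }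
  assert (P0 : P k 0 = 0) by (unfold P; ring).
  assert (P1 : 0 <= P k 1) by (unfold P; rewrite Rmult_1_l; apply pow_le; lra).
  assert (0 < h (dP_root k)) by (unfold h; apply Rinv_0_lt_compat, pow_lt, rho_prod_pos; lra).
  rewrite (RInt_ext _ (fun x => h x * dP k x)) by (intros x _; apply Rmult_comm).
  nra.
Qed.

Lemma I1_integrand_eq (k : nat) (a x : R) : 0 < a -> 0 < x < 1 ->
  I1_integrand (S (S k)) a x = - ((a ^ 2) ^ k / a ^ 2) * (dP k x / rho_prod a x ^ 2).
Proof.
  intros Ha Hx. unfold I1_integrand, f_n, rho_prod.
  replace (S (S k) - 1)%nat with (S k) by lia. rewrite !S_INR.
  set (u := a * (1 + x)); set (v := a * (1 - x)).
  assert (Hu : 0 < u) by (unfold u; nra). assert (Hv : 0 < v) by (unfold v; nra).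
  assert (Eu : 1 - exp (- u) = u * rho u) by (rewrite rho_eq by lra; field; lra).
  assert (Ev : 1 - exp (- v) = v * rho v) by (rewrite rho_eq by lra; field; lra).
  assert (Euv : u ^ S k * v ^ S k = (a ^ 2) ^ S k * (1 - x ^ 2) ^ S k)
    by (rewrite <- !Rpow_mult_distr; f_equal; unfold u, v; ring).
  assert (Hdx : dP k x = (1 - x ^ 2) ^ k * (1 - (2 * INR k + 1) * x ^ 2) / (1 - x ^ 2)).
  { rewrite <- dP_mul_one_sub_sqr. field. nra. }
  assert (0 < rho u) by (apply rho_pos; lra). assert (0 < rho v) by (apply rho_pos; lra).
  rewrite Eu, Ev, Hdx.
  transitivity (((2 * (INR k + 1 + 1) - 3) * x ^ 2 - 1) * (u ^ S k * v ^ S k)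
                / ((u * v) ^ 2 * (rho u * rho v) ^ 2)).
  { field. repeat split; lra. }
  rewrite Euv. replace (u * v) with (a ^ 2 * (1 - x ^ 2)) by (unfold u, v; ring).
  cbn [pow]. field. repeat split; try lra; nra.
Qed.

Theorem lemma3p1 (n : nat) (hn : (2 <= n)%nat) (a : R) (ha : 0 < a) :
  ex_RInt (I1_integrand n a) 0 1 /\ RInt (I1_integrand n a) 0 1 < 0.
Proof.
  destruct n as [|[|k]]; [lia | lia |].
  set (c := (a ^ 2) ^ k / a ^ 2).
  assert (Hc : 0 < c) by (apply Rdiv_lt_0_compat; apply pow_lt; nra).
  set (g x := dP k x / rho_prod a x ^ 2).
  assert (Hg : ex_RInt g 0 1).
  { apply (ex_RInt_continuous (V := R_CompleteNormedModule)). intros x Hx.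
    rewrite Rmin_left, Rmax_right in Hx by lra.
    apply (continuous_mult (dP k) (fun x => / rho_prod a x ^ 2)).
    - apply continuous_dP.
    - now apply continuous_inv_sqr_rho_prod. }
  assert (HI : is_RInt (I1_integrand (S (S k)) a) 0 1 (scal (- c) (RInt g 0 1))).
  { apply (is_RInt_ext (fun x => scal (- c) (g x))).
    - intros x Hx. rewrite Rmin_left, Rmax_right in Hx by lra.
      symmetry. now apply I1_integrand_eq.
    - exact (is_RInt_scal _ _ _ (- c) _ (RInt_correct _ _ _ Hg)). }
  split; [eexists; exact HI|].
  rewrite (is_RInt_unique _ _ _ _ HI).
  assert (Hpos : 0 < RInt g 0 1) by now apply RInt_dP_div_rho_prod_pos.
  change (- c * RInt g 0 1 < 0). nra.
Qed.
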